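(* Let $\bar D$ be any distribution over $\mathcal{X}\times\{0,1\}$ with random variables $(\mathsf X,\bar{\mathsf Y})\sim\bar D$, and let $f\colon\mathcal X\to[0,1]$ be any randomised classifier. Let $\tau\in[0,1]$ and put $c:=\frac{1}{1+\tau}\in[\tfrac12,1]$. Then: (i) if $\mathrm{FNR}(f;\bar D)<1$, then $\mathrm{DI}(f;\bar D)\ge\tau \iff \mathrm{CS}_{\mathrm{bal}}(f;\bar D,c)\ge 1-c$; (ii) if $0<\mathrm{FNR}(f;\bar D)<1$, then $\mathrm{DI}^\diamond(f;\bar D)\ge\tau \iff \mathrm{CS}_{\mathrm{bal}}(f;\bar D,c)\in[1-c,\,c]$.
   Context: A randomised classifier $f\colon\mathcal X\to[0,1]$ predicts label $1$ on $x$ with probability $f(x)$. For a distribution $\bar D$ of $(\mathsf X,\bar{\mathsf Y})$ on $\mathcal X\times\{0,1\}$: $\mathrm{FNR}(f;\bar D)=\mathbb E_{\mathsf X\mid\bar{\mathsf Y}=1}[1-f(\mathsf X)]$, $\mathrm{FPR}(f;\bar D)=\mathbb E_{\mathsf X\mid\bar{\mathsf Y}=0}[f(\mathsf X)]$. The balanced cost-sensitive risk is $\mathrm{CS}_{\mathrm{bal}}(f;\bar D,c)=(1-c)\,\mathrm{FNR}(f;\bar D)+c\,\mathrm{FPR}(f;\bar D)$. The disparate impact factor is $\mathrm{DI}(f;\bar D)=\frac{\mathrm{FPR}(f;\bar D)}{1-\mathrm{FNR}(f;\bar D)}$, and its symmetrised version is $\mathrm{DI}^\diamond(f;\bar D)=\min\big(\mathrm{DI}(f;\bar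 D),\mathrm{DI}(1-f;\bar D)\big)$, where $1-f$ is the classifier $x\mapsto 1-f(x)$. *)

From HB Require Import structures.
From mathcomp Require Import all_boot all_order all_algebra.
From mathcomp Require Import all_classical all_reals all_analysis.
Set Implicit Arguments. Unset Strict Implicit. Unset Printing Implicit Defensive.
Import Order.TTheory GRing.Theory Num.Theory.
Local Open Scope classical_set_scope.
Local Open Scope ring_scope.

(* A distribution Dbar of (X, Ybar) on X * bool is a probability measure
   P : probability (X * bool) R.  Conditional expectations given Ybar = y are
   E[g | Ybar = y] = (\int_{Ybar = y} g dP) / P(Ybar = y)
   (well defined when P(Ybar = y) > 0, which the theorem assumes). *)

Definition pos_event (X : Type) : set (X * bool) := [set z | z.2 = true].
Definition neg_event (X : Type) : set (X * bool) := [set z | z.2 = false].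

Definition condE (d : measure_display) (X : measurableType d) (R : realType)
  (P : probability (X * bool)%type R) (A : set (X * bool)) (g : X -> R) : R :=
  fine (\int[P]_(z in A) (g z.1)%:E) / fine (P A).

Definition FNR d (X : measurableType d) (R : realType)
  (P : probability (X * bool)%type R) (f : X -> R) : R :=
  condE P (@pos_event X) (fun x => 1 - f x).

Definition FPR d (X : measurableType d) (R : realType)
  (P : probability (X * bool)%type R) (f : X -> R) : R :=
  condE P (@neg_event X) f.

Definition CSbal d (X : measurableType d) (R : realType)
  (P : probability (X * bool)%type R) (f : X -> R) (c : R) : R :=
  (1 - c) * FNR P f + c * FPR P f.

(* DI(f; Dbar) = FPR / (1 - FNR)   (MathComp convention: x / 0 = 0) *)
Definition DI d (X : measurableType d) (R : realType)
  (P : probability (X * bool)%type R) (f : X -> R) : R :=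
  FPR P f / (1 - FNR P f).

Definition DIsym d (X : measurableType d) (R : realType)
  (P : probability (X * bool)%type R) (f : X -> R) : R :=
  Num.min (DI P f) (DI P (fun x => 1 - f x)).

From HB Require Import structures.
From mathcomp Require Import all_boot all_order all_algebra.
From mathcomp Require Import all_classical all_reals all_analysis.
From mathcomp Require Import measurable_realfun ring.
Import Order.TTheory GRing.Theory Num.Theory.
Local Open Scope classical_set_scope.
Local Open Scope ring_scope.

(* Replacing f by 1 - f turns FNR into 1 - FNR and FPR into 1 - FPR, so
   DI(1 - f) = (1 - FPR) / FNR.  With a = FNR, b = FPR and c = 1/(1 + tau)
   one has CS_bal = c (tau a + b) and 1 - c = c tau, hence CS_bal >= 1 - c iff
   tau (1 - a) <= b, i.e. DI >= tau, and CS_bal <= c iff tau a <= 1 - b,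
   i.e. DI(1 - f) >= tau. *)

Lemma integral_compl_add {d} {T : measurableType d} {R : realType}
    (P : probability T R) {A : set T} (mA : measurable A) {g : T -> R}
    (gm : measurable_fun setT g) (g01 : forall z, 0 <= g z <= 1) :
  (\int[P]_(z in A) (1 - g z)%:E + \int[P]_(z in A) (g z)%:E = P A)%E.
Proof.
have g0 z : 0 <= g z by case/andP: (g01 z).
have g1 z : 0 <= 1 - g z by rewrite subr_ge0; case/andP: (g01 z).
rewrite -ge0_integralD //; last 4 first.
- by move=> z _; rewrite lee_fin.
- apply/measurable_EFinP/measurable_funTS.
  exact: measurable_funB (measurable_cst _) gm.
- by move=> z _; rewrite lee_fin.
- exact/measurable_EFinP/measurable_funTS.
transitivity (\int[P]_(z in A) (cst 1%E z))%E.
  by apply: eq_integral => z _; rewrite -EFinD subrK.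
by rewrite integral_cst // mul1e.
Qed.

Lemma condE_compl {d} {X : measurableType d} {R : realType}
    (P : probability (X * bool)%type R) {A : set (X * bool)}
    (mA : measurable A) (hA : (0 < P A)%E) (g : X -> R)
    (gm : measurable_fun setT g) (g01 : forall x, 0 <= g x <= 1) :
  condE P A (fun x => 1 - g x) = 1 - condE P A g.
Proof.
have gm1 : measurable_fun [set: X * bool] (g \o fst).
  exact: measurableT_comp gm measurable_fst.
have := integral_compl_add P mA gm1 (fun z => g01 z.1) => /= sumA.
have PAf : P A \is a fin_num := fin_num_measure P A mA.
move: (PAf); rewrite -sumA fin_numD => /andP[I1f I2f].
have PA0 : fine (P A) != 0 by rewrite gt_eqF // fine_gt0 // hA /= ltey_eq PAf.
rewrite /condE -[in RHS](divff PA0) -mulrBl; congr (_ / _).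
by rewrite -sumA (fineD I1f I2f) addrK.
Qed.

Lemma measurable_pos_event {d} (X : measurableType d) :
  measurable (@pos_event X).
Proof.
rewrite -[X in measurable X]setTI.
exact: measurable_snd measurableT [set true] I.
Qed.

Lemma measurable_neg_event {d} (X : measurableType d) :
  measurable (@neg_event X).
Proof.
rewrite -[X in measurable X]setTI.
exact: measurable_snd measurableT [set false] I.
Qed.

Section ComplementClassifier.
Context {d} (X : measurableType d) (R : realType).
Variable P : probability (X * bool)%type R.
Hypotheses (hpos : (0 < P (@pos_event X))%E) (hneg : (0 < P (@neg_event X))%E).
Variable f : X -> R.
Hypotheses (fmeas : measurable_fun setT f) (f01 : forall x, 0 <= f x <= 1).

Lemma FNR_compl : FNR P (fun x => 1 - f x) = 1 - FNR P f.
Proof.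
rewrite /FNR (_ : (fun x => 1 - (1 - f x)) = f); last first.
  by apply: funext => x; exact: subKr.
by rewrite condE_compl ?subKr //; exact: measurable_pos_event.
Qed.

Lemma FPR_compl : FPR P (fun x => 1 - f x) = 1 - FPR P f.
Proof. by rewrite /FPR condE_compl //; exact: measurable_neg_event. Qed.

Lemma DI_compl : DI P (fun x => 1 - f x) = (1 - FPR P f) / FNR P f.
Proof. by rewrite /DI FNR_compl FPR_compl subKr. Qed.

End ComplementClassifier.

Section Thresholds.
Variables (R : realFieldType) (tau a b : R).
Hypothesis tau_ge0 : 0 <= tau.
Let c := (1 + tau)^-1.

Let tau1_gt0 : 0 < 1 + tau. Proof. by rewrite ltr_pwDl. Qed.

Let c_gt0 : 0 < c. Proof. by rewrite /c invr_gt0. Qed.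

Let oneBc : 1 - c = c * tau.
Proof. by rewrite /c; field; rewrite gt_eqF. Qed.

Let cost_eq : (1 - c) * a + c * b = c * (tau * a + b).
Proof. by rewrite oneBc; ring. Qed.

Lemma cost_ge_oneBc : (1 - c <= (1 - c) * a + c * b) = (tau <= tau * a + b).
Proof. by rewrite cost_eq oneBc ler_pM2l. Qed.

Lemma cost_le_c : ((1 - c) * a + c * b <= c) = (tau * a + b <= 1).
Proof. by rewrite cost_eq -[leRHS]mulr1 ler_pM2l. Qed.

Lemma ge_div_oneB : a < 1 -> (tau <= b / (1 - a)) = (tau <= tau * a + b).
Proof.
by move=> a1; rewrite ler_pdivlMr ?subr_gt0 // mulrBr mulr1 lerBlDr addrC.
Qed.

Lemma ge_oneB_div : 0 < a -> (tau <= (1 - b) / a) = (tau * a + b <= 1).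
Proof. by move=> a0; rewrite ler_pdivlMr // lerBrDr. Qed.

End Thresholds.

Theorem lemma1 (d : measure_display) (X : measurableType d) (R : realType)
  (P : probability (X * bool)%type R)
  (hpos : (0 < P (@pos_event X))%E) (hneg : (0 < P (@neg_event X))%E)
  (f : X -> R) (fmeas : measurable_fun setT f)
  (f01 : forall x, 0 <= f x <= 1)
  (tau : R) (htau : 0 <= tau <= 1) :
  let c := (1 + tau)^-1 in
  (FNR P f < 1 -> (tau <= DI P f <-> 1 - c <= CSbal P f c)) /\
  (0 < FNR P f < 1 ->
     (tau <= DIsym P f <-> 1 - c <= CSbal P f c <= c)).
Proof.
(* [tau <= 1] only places c in [1/2, 1]; the equivalences do not need it. *)
move=> c; case/andP: htau => tau0 _.
rewrite /DIsym DI_compl // /CSbal /DI /c cost_ge_oneBc // cost_le_c //.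
split=> [a1 | /andP[a0 a1]]; first by rewrite ge_div_oneB.
by rewrite le_min ge_div_oneB // ge_oneB_div.
Qed.
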